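(* Let $\omega\in\mathbb{F}_8$ be a root of $y^3+y+1$, let $m\in\mathbb{N}$, let $\emptyset\neq L\subsetneq[m]$, let $D=\Delta_L+\omega\Delta_L+\omega^2\Delta_L\subseteq\mathbb{F}_8^m$ and $D^c=\mathbb{F}_8^m\setminus D$. Then $C_{D^c}$ is a $2$-weight linear code over $\mathbb{F}_8$ of length $2^{3m}-2^{3|L|}$, dimension $m$ and minimum distance $7\cdot2^{3(m-1)}-7\cdot2^{3(|L|-1)}$; its codewords have weights $0$, $7\cdot2^{3(m-1)}-7\cdot2^{3(|L|-1)}$ and $7\cdot2^{3(m-1)}$. Moreover, $C_{D^c}$ is a Griesmer code and hence distance optimal, and it is a minimal code if $3(m-|L|)-4\ge0$.
   Context: $[m]=\{1,\dots,m\}$; $\Delta_L=\{w\in\mathbb{F}_2^m:\{i:w_i\ne0\}\subseteq L\}$. $A+\omega B+\omega^2C=\{a+\omega b+\omega^2c: a\in A,b\in B,c\in C\}$. For an ordered finite set $P\subseteq\mathbb{F}_8^m$, $C_P=\{(v\cdot d)_{d\in P}: v\in\mathbb{F}_8^m\}$. An $l$-weight code has exactly $l$ distinct nonzero Hamming weights. An $[n,k,d]$ code over $\mathbb{F}_q$ is Griesmer if $\sum_{i=0}^{k-1}\lceil d/q^i\rceil=n$, and distance optimal if no $[n,k,d+1]$ linear code over $\mathbb{F}_q$ exists. A code is minimal if for every nonzero codeword $c$, each nonzero codeword $c'$ with $\mathrm{Supp}(c')\subseteq\mathrm{Supp}(c)$ is a scalar multiple of $c$. *)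

From HB Require Import structures.
From mathcomp Require Import all_boot all_order all_algebra.
Set Implicit Arguments. Unset Strict Implicit. Unset Printing Implicit Defensive.
Import GRing.Theory.
Local Open Scope ring_scope.

Section Codes.
Variable F : finFieldType.

(* Delta_L : vectors of F_2^m (embedded in F^m via F_2 = {0,1} ⊆ F)
   whose support is contained in L. *)
Definition Delta (m : nat) (L : {set 'I_m}) : {set 'rV[F]_m} :=
  [set w : 'rV[F]_m | [forall i, (w 0 i == 0) || ((w 0 i == 1) && (i \in L))]].

Definition Dset (w : F) (m : nat) (L : {set 'I_m}) : {set 'rV[F]_m} :=
  [set v : 'rV[F]_m | [exists a in Delta L, exists b in Delta L, exists c in Delta L,
             v == a + w *: b + w ^+ 2 *: c]].

(* Generator matrix of C_P: column j is the j-th element of P (in enum order),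
   so that (v *m code_genmat P) = (v . d)_{d in P}. *)
Definition code_genmat (m : nat) (P : {set 'rV[F]_m}) : 'M[F]_(m, #|P|) :=
  \matrix_(i < m, j < #|P|) (enum_val j) 0 i.

Definition code (m : nat) (P : {set 'rV[F]_m}) : {set 'rV[F]_#|P|} :=
  [set v *m code_genmat P | v : 'rV[F]_m].

Definition wt (n : nat) (c : 'rV[F]_n) : nat := #|[set j | c 0 j != 0]|.

Definition supp (n : nat) (c : 'rV[F]_n) : {set 'I_n} := [set j | c 0 j != 0].

Definition nz_weights_are (n : nat) (C : {set 'rV[F]_n}) (ws : seq nat) : Prop :=
  forall k : nat, k \in ws <-> exists2 c, c \in C & (c != 0) && (wt c == k).

Definition is_min_dist (n : nat) (C : {set 'rV[F]_n}) (d : nat) : Prop :=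
  (exists2 c, c \in C & (c != 0) && (wt c == d)) /\
  (forall c, c \in C -> c != 0 -> (d <= wt c)%N).

(* Griesmer bound met with equality: sum_{i<k} ceil(d/q^i) = n *)
Definition griesmer (n k d q : nat) : Prop :=
  (\sum_(i < k) ((d + q ^ i - 1) %/ q ^ i) = n)%N.

(* No [n,k,d+1] linear code over F exists; a k-dimensional linear code of
   length n is the row space of a k x n matrix of rank k. *)
Definition distance_optimal (n k d : nat) : Prop :=
  ~ exists G : 'M[F]_(k, n),
      \rank G = k /\ is_min_dist [set v *m G | v : 'rV[F]_k] d.+1.

Definition minimal_code (n : nat) (C : {set 'rV[F]_n}) : Prop :=
  forall c, c \in C -> c != 0 ->
  forall c', c' \in C -> c' != 0 -> supp c' \subset supp c ->
  exists a : F, c' = a *: c.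

End Codes.

(* Since y^3 + y + 1 has no root in F_2, the elements 1, w, w^2 are F_2-linearly
   independent, so D = Delta_L + w Delta_L + w^2 Delta_L is the coordinate subspace
   F_8^L and C_{D^c} is the code of an anticode.  A nonzero linear form vanishes on
   exactly a 1/q fraction of a subspace on which it is not identically zero; hence
   the codeword of v != 0 has weight (q-1) q^(m-1), minus (q-1) q^(|L|-1) when v does
   not vanish on L.  Griesmer equality is a geometric-sum computation, distance
   optimality follows from the Plotkin bound (count the nonzero entries of all
   codewords column by column), and minimality from the Ashikhmin-Barg criterion
   w_min / w_max > (q-1)/q. *)

From HB Require Import structures.
From mathcomp Require Import all_boot all_order all_algebra all_field.
From mathcomp Require Import ring zify.
Set Implicit Arguments. Unset Strict Implicit. Unset Printing Implicit Defensive.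
Import GRing.Theory.
Local Open Scope ring_scope.

Section Fibers.
Variables (F : finFieldType) (k : nat) (S : {set 'rV[F]_k}) (u : 'cV[F]_k).
Hypotheses (addS : {in S &, forall x y, x + y \in S})
  (scaleS : forall a, {in S, forall x, a *: x \in S}).

Lemma card_fiber y a : y \in S -> (y *m u) 0 0 = 1 ->
  #|[set x : 'rV_k in S | (x *m u) 0 0 == a]| = #|[set x : 'rV_k in S | (x *m u) 0 0 == 0]|.
Proof.
move=> yS uy; rewrite -[RHS](card_imset _ (addIr (a *: y))).
have shift x b : ((x + b *: y) *m u) 0 0 = (x *m u) 0 0 + b.
  by rewrite mulmxDl -scalemxAl mxE [X in _ + X]mxE uy mulr1.
apply: eq_card => z; rewrite inE; apply/andP/imsetP.
- case=> zS /eqP uz; exists (z + - a *: y); last by rewrite scaleNr subrK.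
  by rewrite inE addS ?scaleS // shift uz subrr /=.
- case=> x; rewrite inE => /andP[xS /eqP ux] ->.
  by rewrite addS ?scaleS // shift ux add0r.
Qed.

Lemma card_nonorth : (exists2 y, y \in S & (y *m u) 0 0 != 0) ->
  (#|F| * #|[set x : 'rV_k in S | ((x *m u) 0 0 != 0)%R]| = #|F|.-1 * #|S|)%N.
Proof.
case=> y yS uy_neq0; set K := [set x : 'rV_k in S | (x *m u) 0 0 == 0].
have y1S : ((y *m u) 0 0)^-1 *: y \in S by apply: scaleS.
have uy1 : ((((y *m u) 0 0)^-1 *: y) *m u) 0 0 = 1 by rewrite -scalemxAl mxE mulVf.
have cardS : #|S| = (#|F| * #|K|)%N.
  rewrite -sum1_card (partition_big (fun x => (x *m u) 0 0) predT) //=.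
  rewrite -sum_nat_const; apply: eq_bigr => a _.
  by rewrite sum1_card -(card_fiber a y1S uy1); apply: eq_card => x; rewrite inE.
have -> : [set x : 'rV_k in S | (x *m u) 0 0 != 0] = S :\: K.
  by apply/setP=> x; rewrite !inE; case: (x \in S); rewrite ?andbT.
have KS : K \subset S by apply/subsetP=> x; rewrite inE => /andP[].
by rewrite cardsD (setIidPr KS) cardS -{2}[#|K|]mul1n -mulnBl subn1 mulnCA.
Qed.
End Fibers.

Section LinearCodes.
Variable F : finFieldType.
Local Notation q := #|F|.

Lemma wt0 n : wt (0 : 'rV[F]_n) = 0%N.
Proof. by apply/eqP; rewrite cards_eq0; apply/eqP/setP=> j; rewrite !inE mxE eqxx. Qed.

Lemma wt_sum n (c : 'rV[F]_n) : wt c = (\sum_j (c 0 j != 0)%R)%N.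
Proof. by rewrite /wt -sum1dep_card big_mkcond. Qed.

Lemma card_sub_scale_neq0 (x y : F) : (y != 0 -> x != 0) ->
  (#|[set l | (x - l * y != 0)%R]| + (y != 0)%R = q * (x != 0)%R)%N.
Proof.
have [-> _|y_neq0 /(_ isT) x_neq0] := eqVneq y 0.
  rewrite addn0; have [->|x_neq0] := eqVneq x 0.
    rewrite muln0; apply/eqP; rewrite cards_eq0; apply/eqP/setP=> l.
    by rewrite !inE mulr0 subr0 eqxx.
  by rewrite muln1 -cardsT; apply: eq_card => l; rewrite !inE mulr0 subr0.
have -> : [set l | x - l * y != 0] = [set~ x / y].
  by apply/setP=> l; rewrite !inE subr_eq0 eq_sym (can2_eq (mulfK y_neq0) (divfK y_neq0)).
by rewrite cardsC1 x_neq0 muln1 addn1 prednK //; apply/card_gt0P; exists 0.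
Qed.

Lemma sum_wt_sub_scale n (c c' : 'rV[F]_n) : supp c' \subset supp c ->
  (\sum_l wt (c - l *: c') + wt c' = q * wt c)%N.
Proof.
move=> /subsetP sub; under eq_bigr => l _ do rewrite wt_sum.
rewrite !wt_sum big_distrr exchange_big -big_split /=; apply: eq_bigr => j _.
rewrite -(card_sub_scale_neq0 (y := c' 0 j)) => [|c'j]; last first.
  by have := sub j; rewrite !inE; apply.
rewrite -sum1dep_card [in RHS]big_mkcond; congr (_ + _)%N; apply: eq_bigr => l _.
by rewrite !mxE; case: (_ != 0).
Qed.

Lemma minimal_code_wt_ratio k n (G : 'M[F]_(k, n)) (d W : nat) :
  (forall c, c \in [set v *m G | v : 'rV_k] -> c != 0 -> (d <= wt c <= W)%N) ->
  (q.-1 * W < q * d)%N ->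
  minimal_code [set v *m G | v : 'rV_k].
Proof.
move=> wt_bounds W_lt c cC c_neq0 c' c'C c'_neq0 supp_c'.
have [a /eqP|not_mult] := pickP (fun a => c' == a *: c); first by exists a.
exfalso; have diff_in l : c - l *: c' \in [set v *m G | v : 'rV_k].
  case/imsetP: cC c'C => v _ -> /imsetP[v' _ ->].
  by apply/imsetP; exists (v - l *: v'); rewrite // mulmxBl scalemxAl.
have diff_neq0 l : l != 0 -> c - l *: c' != 0.
  move=> l_neq0; rewrite subr_eq0; apply: contraFN (not_mult l^-1) => /eqP->.
  by rewrite scalerA mulVf ?scale1r.
(* The q codewords c - l c' all have weight >= d except c itself, yet their
   weights add up to only q wt c - wt c'. *)
have wt_sum_ge : (wt c + q.-1 * d <= \sum_l wt (c - l *: c'))%N.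
  rewrite (bigD1 0) //= scale0r subr0 leq_add2l -(cardC1 (0 : F)) -sum_nat_const.
  apply: leq_sum => l l_neq0.
  by have /andP[] := wt_bounds _ (diff_in l) (diff_neq0 l l_neq0).
have := leq_add wt_sum_ge (leqnn (wt c')); rewrite sum_wt_sub_scale //.
have /andP[d_le _] := wt_bounds _ c'C c'_neq0.
have /andP[_ le_W] := wt_bounds _ cC c_neq0.
have := leq_mul (leqnn q.-1) le_W.
have qE : q = q.-1.+1 by rewrite prednK //; apply/card_gt0P; exists 0.
move: W_lt; set p := q.-1; rewrite qE !mulSn -/p; lia.
Qed.

Lemma plotkin_bound k n (G : 'M[F]_(k, n)) d : \rank G = k ->
  is_min_dist [set v *m G | v : 'rV_k] d ->
  (q * ((q ^ k).-1 * d) <= n * (q.-1 * q ^ k))%N.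
Proof.
move=> rkG [_ min_d].
have card_rV : #|{: 'rV[F]_k}| = (q ^ k)%N by rewrite card_mx mul1n.
have col_count j : (q * #|[set v : 'rV_k | ((v *m G) 0 j != 0)%R]| <= q.-1 * q ^ k)%N.
  have -> : [set v : 'rV_k | (v *m G) 0 j != 0] =
            [set v in [set: 'rV_k] | (v *m col j G) 0 0 != 0].
    by apply/setP=> v; rewrite !inE /= colE mulmxA -colE [in RHS]mxE.
  have [i Gij | G0] := pickP (fun i => col j G i 0 != 0).
    rewrite card_nonorth => [|x y _ _|a x _|]; rewrite ?inE ?cardsT ?card_rV //.
    by exists (delta_mx 0 i); rewrite // -rowE; move: Gij; rewrite !mxE.
  suff -> : [set v in [set: 'rV_k] | (v *m col j G) 0 0 != 0] = set0 by rewrite cards0 muln0.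
  apply/setP=> v; rewrite !inE mxE big1 ?eqxx // => i _.
  by rewrite (eqP (negbFE (G0 i))) mulr0.
have sum_wt : (\sum_v wt (v *m G) = \sum_j #|[set v : 'rV_k | ((v *m G) 0 j != 0)%R]|)%N.
  under eq_bigr do rewrite wt_sum.
  rewrite exchange_big; apply: eq_bigr => j _; rewrite -sum1dep_card [in RHS]big_mkcond.
  by apply: eq_bigr => v _; case: (_ != 0).
have wt_ge : ((q ^ k).-1 * d <= \sum_v wt (v *m G))%N.
  rewrite (bigD1 0) //= -card_rV -(cardC1 (0 : 'rV_k)) -sum_nat_const.
  apply: leq_trans (leq_addl _ _); apply: leq_sum => v v_neq0.
  apply: min_d; first by apply/imsetP; exists v.
  by rewrite mulmx_free_eq0 ?/row_free ?rkG.
apply: leq_trans (leq_mul (leqnn q) wt_ge) _.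
rewrite sum_wt big_distrr -[n in (n * _)%N]card_ord -sum_nat_const.
by apply: leq_sum => j _; apply: col_count.
Qed.
End LinearCodes.

Section AnticodeArithmetic.
Local Open Scope nat_scope.
Variables q m l : nat.
Hypotheses (q_gt1 : 1 < q) (l_gt0 : 0 < l) (l_le_m : l <= m).

Let A := q ^ m.-1.
Let B := q ^ l.-1.

Let q_gt0 : 0 < q. Proof. exact: ltnW. Qed.
Let B_gt0 : 0 < B. Proof. by rewrite expn_gt0 q_gt0. Qed.
Let qB : q ^ l = q * B. Proof. by rewrite /B -expnS prednK. Qed.
Let qA : q ^ m = q * A.
Proof. by rewrite /A -expnS prednK //; apply: leq_trans l_le_m. Qed.

Lemma ceil_div_subn a b P : b < P -> (a * P - b + P - 1) %/ P = a.
Proof.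
move=> b_lt_P; have P_gt0 : 0 < P by apply: leq_ltn_trans b_lt_P.
case: a => [|a]; first by rewrite sub0n add0n divn_small // subn1 prednK.
have -> : a.+1 * P - b + P - 1 = a.+1 * P + (P - 1 - b) by rewrite mulSn; lia.
by rewrite divnMDl // divn_small; lia.
Qed.

Lemma sum_geom_rev n : \sum_(i < n) q.-1 * q ^ (n.-1 - i) = q ^ n - 1.
Proof.
rewrite -[in RHS](exp1n n) subn_exp subn1 big_distrr.
by apply: eq_bigr => i _; rewrite exp1n muln1.
Qed.

Lemma griesmer_anticode : griesmer (q ^ m - q ^ l) m (q.-1 * A - q.-1 * B) q.
Proof.
have term (i : 'I_m) : (q.-1 * A - q.-1 * B + q ^ i - 1) %/ q ^ i
    + (if i < l then q.-1 * q ^ (l.-1 - i) else 0) = q.-1 * q ^ (m.-1 - i).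
  have split_pow j : i <= j -> q ^ j = q ^ (j - i) * q ^ i by move=> ?; rewrite -expnD subnK.
  have i_le : i <= m.-1 by have := ltn_ord i; lia.
  rewrite /A (split_pow _ i_le) mulnA.
  case: ltnP => [i_lt_l|l_le_i].
    have i_le' : i <= l.-1 by lia.
    rewrite /B (split_pow _ i_le') mulnA -mulnBl -[_ * q ^ i]subn0.
    rewrite ceil_div_subn ?expn_gt0 ?q_gt0 // subnK // leq_mul2l leq_pexp2l ?orbT //.
    lia.
  rewrite addn0 ceil_div_subn //; apply: (@leq_trans (q * B)).
    by rewrite ltn_pmul2r ?expn_gt0 ?q_gt0 // ltn_predL.
  by rewrite /B -expnS prednK // leq_pexp2l.
move: (sum_geom_rev m); rewrite -(eq_bigr _ (fun i _ => term i)) big_split /=.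
rewrite -big_mkcond -(big_ord_widen _ (fun i => q.-1 * q ^ (l.-1 - i)) l_le_m).
rewrite sum_geom_rev /griesmer.
have : 0 < q ^ l by rewrite expn_gt0 q_gt0.
have := leq_pexp2l q_gt0 l_le_m; move: (\sum_(i < m) _)%N => S; lia.
Qed.

Lemma plotkin_anticode_gap :
  (q ^ m - q ^ l) * (q.-1 * q ^ m) < q * ((q ^ m).-1 * (q.-1 * A - q.-1 * B).+1).
Proof.
rewrite qA qB -mulnBr -mulnA ltn_pmul2l // mulnA [(A - B) * _]mulnC mulnBr.
set d := q.-1 * A - q.-1 * B; set M := q * A.
have d_lt : d.+1 < M.
  have : 0 < q.-1 * B by rewrite muln_gt0 B_gt0 andbT; lia.
  have : M = q.-1 * A + A by rewrite /M -{1}(prednK q_gt0) mulSn addnC.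
  have : 0 < A by rewrite expn_gt0 q_gt0.
  rewrite /d; lia.
have M_gt0 : 0 < M by apply: leq_trans d_lt.
rewrite -{1}[M](prednK M_gt0) !mulnS mulnC ltn_add2r -ltnS prednK //.
Qed.

Lemma wt_ratio_anticode : l.+2 <= m ->
  q.-1 * (q.-1 * A) < q * (q.-1 * A - q.-1 * B).
Proof.
move=> l2_le_m; rewrite -mulnBr mulnCA ltn_pmul2l; last by rewrite -ltnS prednK.
have qqB_le : q * (q * B) <= A.
  by rewrite /A /B -!expnS prednK // leq_pexp2l //; lia.
have : q * B < q * (q * B) by rewrite -[X in X < _]mul1n ltn_pmul2r ?muln_gt0 ?q_gt0.
have : q * A = q.-1 * A + A by rewrite -{1}(prednK q_gt0) mulSn addnC.
rewrite mulnBr; lia.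
Qed.
End AnticodeArithmetic.

Section CoordinateSubspace.
Variable F : finFieldType.
Local Notation q := #|F|.

Definition rV_on m (L : {set 'I_m}) : {set 'rV[F]_m} :=
  [set v : 'rV[F]_m | [forall i, (i \notin L) ==> (v 0 i == 0)]].

Lemma rV_onD m (L : {set 'I_m}) : {in rV_on L &, forall x y, x + y \in rV_on L}.
Proof.
move=> x y; rewrite !inE => /forallP xL /forallP yL; apply/forallP=> i.
by apply/implyP=> iNL; rewrite mxE (eqP (implyP (xL i) iNL)) (eqP (implyP (yL i) iNL)) addr0.
Qed.

Lemma rV_onZ m (L : {set 'I_m}) a : {in rV_on L, forall x, a *: x \in rV_on L}.
Proof.
move=> x; rewrite !inE => /forallP xL; apply/forallP=> i.
by apply/implyP=> iNL; rewrite mxE (eqP (implyP (xL i) iNL)) mulr0.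
Qed.

Lemma card_rV_on m (L : {set 'I_m}) : #|rV_on L| = (q ^ #|L|)%N.
Proof.
have row_inj : injective (fun g : {ffun 'I_m -> F} => \row_i g i).
  by move=> g g' /rowP eq_gg'; apply/ffunP=> i; have := eq_gg' i; rewrite !mxE.
rewrite -[q]cardsT -(card_pffun_on 0) -(card_imset _ row_inj).
apply: eq_card => v; rewrite inE; apply/forallP/imsetP.
- move=> vL; exists [ffun i => v 0 i]; last by apply/rowP=> i; rewrite !mxE ffunE.
  apply/pffun_onP; split=> [|y _]; last by rewrite inE.
  by apply/subsetP=> i; rewrite !inE ffunE; apply: contraR => /(implyP (vL i)).
- case=> g /pffun_onP[gL _] -> i; apply/implyP; rewrite mxE; apply: contraR => gi.
  by apply: (subsetP gL); rewrite inE.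
Qed.

Lemma wt_code m (P : {set 'rV[F]_m}) (v : 'rV[F]_m) :
  wt (v *m code_genmat P) = #|[set d : 'rV_m in P | (d *m v^T) 0 0 != 0]|.
Proof.
have coordE j : (v *m code_genmat P) 0 j = (enum_val j *m v^T) 0 0.
  by rewrite !mxE; apply: eq_bigr => i _; rewrite !mxE mulrC.
rewrite /wt -(card_imset _ enum_val_inj); apply: eq_card => d; rewrite inE.
apply/imsetP/andP.
- by case=> j; rewrite inE coordE => uj ->; rewrite enum_valP.
- case=> dP ud; exists (enum_rank_in dP d); last by rewrite enum_rankK_in.
  by rewrite inE coordE enum_rankK_in.
Qed.

Lemma rV_onT m : rV_on [set: 'I_m] = [set: 'rV[F]_m].
Proof. by apply/setP=> v; rewrite !inE; apply/forallP=> i; rewrite inE. Qed.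

Lemma card_nonorth_rV_on m (L : {set 'I_m}) (u : 'cV[F]_m) : [exists i in L, u i 0 != 0] ->
  (q * #|[set x : 'rV_m in rV_on L | ((x *m u) 0 0 != 0)%R]| = q.-1 * q ^ #|L|)%N.
Proof.
case/existsP=> i /andP[iL ui]; rewrite -card_rV_on.
apply: card_nonorth; [exact: rV_onD | exact: rV_onZ |].
exists (delta_mx 0 i); last by rewrite -rowE mxE.
rewrite inE; apply/forallP=> j; apply/implyP=> jNL; rewrite mxE eqxx /=.
by case: (j =P i) jNL => [->|_]; rewrite ?iL //= eqxx.
Qed.

Lemma nonorth_rV_on_eq0 m (L : {set 'I_m}) (u : 'cV[F]_m) : [forall i in L, u i 0 == 0] ->
  [set x : 'rV_m in rV_on L | (x *m u) 0 0 != 0] = set0.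
Proof.
move=> /forall_inP uL; apply/setP=> x; rewrite !inE; apply/negP=> /andP[/forallP xL].
rewrite mxE big1 ?eqxx // => i _; case: (boolP (i \in L)) => iL.
  by rewrite (eqP (uL i iL)) mulr0.
by rewrite (eqP (implyP (xL i) iL)) mul0r.
Qed.

Lemma card_nonorth_anticode m (L : {set 'I_m}) (v : 'rV[F]_m) : v != 0 ->
  #|[set x : 'rV_m in ~: rV_on L | (x *m v^T) 0 0 != 0]| =
  (q.-1 * q ^ m.-1 - (if [exists i in L, (v 0 i != 0)%R] then q.-1 * q ^ #|L|.-1 else 0))%N.
Proof.
move=> /rV0Pn[i vi]; have q_gt0 : (0 < q)%N by apply/card_gt0P; exists 0.
have m_gt0 : (0 < m)%N by have := ltn_ord i; lia.
have qpredE n : (0 < n)%N -> (q * (q.-1 * q ^ n.-1) = q.-1 * q ^ n)%N.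
  by move=> n_gt0; rewrite mulnCA -expnS prednK.
set N := [set x : 'rV_m in rV_on [set: 'I_m] | (x *m v^T) 0 0 != 0].
set NL := [set x : 'rV_m in rV_on L | (x *m v^T) 0 0 != 0].
have -> : [set x : 'rV_m in ~: rV_on L | (x *m v^T) 0 0 != 0] = N :\: NL.
  apply/setP=> x; rewrite /N /NL rV_onT !inE.
  by case: [forall _, _]; case: (_ != 0).
have NLN : NL \subset N by apply/subsetP=> x; rewrite /N /NL rV_onT !inE => /andP[].
have hit L' : [exists j in L', v^T j 0 != 0] = [exists j in L', v 0 j != 0].
  by apply: eq_existsb => j; rewrite mxE.
apply/eqP; rewrite cardsD (setIidPr NLN) -(eqn_pmul2l q_gt0) mulnBr.
rewrite card_nonorth_rV_on ?hit; last by apply/existsP; exists i; rewrite inE.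
rewrite cardsT card_ord; case: ifP => [L_hit | /negbT L_miss].
  rewrite card_nonorth_rV_on ?hit // mulnBr !qpredE //.
  by case/existsP: L_hit => j /andP[jL _]; apply/card_gt0P; exists j.
rewrite /NL nonorth_rV_on_eq0 ?cards0 ?muln0 ?subn0 ?qpredE //.
apply/forall_inP=> j jL; rewrite mxE; apply: contraR L_miss => vj.
by apply/exists_inP; exists j.
Qed.
End CoordinateSubspace.

Section AnticodeCode.
Variables (F : finFieldType) (m : nat) (L : {set 'I_m}) (P : {set 'rV[F]_m}).
Hypotheses (L_neq0 : L != set0) (L_proper : L != [set: 'I_m]).
(* [P] is kept abstract because the length [#|P|] of the code occurs in types,
   where the set cannot be rewritten. *)
Hypothesis P_def : P = ~: rV_on F L.

Local Notation q := #|F|.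
Local Notation G := (code_genmat P).
Local Notation d := (q.-1 * q ^ m.-1 - q.-1 * q ^ #|L|.-1)%N.
Local Notation W := (q.-1 * q ^ m.-1)%N.

Let q_gt1 : (1 < q)%N. Proof. exact: card_finNzRing_gt1. Qed.
Let L_gt0 : (0 < #|L|)%N. Proof. by rewrite card_gt0. Qed.
Let L_lt_m : (#|L| < m)%N.
Proof. by rewrite -[X in (_ < X)%N]card_ord -cardsT proper_card ?properT. Qed.

Lemma card_anticode : #|P| = (q ^ m - q ^ #|L|)%N.
Proof.
by rewrite P_def cardsCs setCK card_rV_on card_mx mul1n.
Qed.

Lemma anticode_wt_lt : (0 < d < W)%N.
Proof.
have : (0 < q.-1 * q ^ #|L|.-1)%N by rewrite muln_gt0 expn_gt0; lia.
have : (q.-1 * q ^ #|L|.-1 < q.-1 * q ^ m.-1)%N by rewrite ltn_mul2l ltn_exp2l; lia.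
lia.
Qed.

Lemma wt_anticode v : v != 0 ->
  wt (v *m G) = if [exists i in L, v 0 i != 0] then d else W.
Proof.
by move=> v_neq0; rewrite wt_code P_def card_nonorth_anticode //; case: ifP; rewrite ?subn0.
Qed.

Lemma anticode_rank : \rank G = m.
Proof.
apply/eqP/inj_row_free => v vG0; apply/eqP; apply: contraTT anticode_wt_lt => v_neq0.
by move: (wt_anticode v_neq0); rewrite vG0 wt0; case: ifP => _ <-; rewrite ?ltnn ?andbF.
Qed.

Lemma anticode_wt_mem c : c \in code P -> c != 0 -> wt c \in [:: d; W].
Proof.
case/imsetP=> v _ -> vG_neq0.
have v_neq0 : v != 0 by apply: contraNneq vG_neq0 => ->; rewrite mul0mx.
by rewrite wt_anticode //; case: ifP; rewrite !inE eqxx ?orbT.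
Qed.

Lemma anticode_wt_attained k : k \in [:: d; W] ->
  exists2 c, c \in code P & (c != 0) && (wt c == k).
Proof.
have witness (i : 'I_m) : exists2 c, c \in code P &
    (c != 0) && (wt c == if i \in L then d else W).
  have ei_neq0 : delta_mx 0 i != 0 :> 'rV[F]_m.
    by apply/rV0Pn; exists i; rewrite mxE !eqxx oner_eq0.
  have hit : [exists j in L, (delta_mx 0 i : 'rV[F]_m) 0 j != 0] = (i \in L).
    apply/exists_inP/idP => [[j jL]|iL]; last by exists i; rewrite // mxE !eqxx oner_eq0.
    by rewrite mxE eqxx; case: (j =P i) => [<- //|_]; rewrite eqxx.
  exists (delta_mx 0 i *m G); first by apply/imsetP; exists (delta_mx 0 i).
  by rewrite wt_anticode // hit mulmx_free_eq0 ?eqxx ?andbT // /row_free anticode_rank.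
rewrite !inE => /orP[] /eqP->.
  by case/set0Pn: L_neq0 => i iL; have := witness i; rewrite iL.
move: L_proper; rewrite -properT => /properP[_ [j _ /negbTE jNL]].
by have := witness j; rewrite jNL.
Qed.

Lemma anticode_nz_weights : nz_weights_are (code P) [:: d; W].
Proof.
move=> k; split; first exact: anticode_wt_attained.
by case=> c cC /andP[c_neq0 /eqP <-]; apply: anticode_wt_mem.
Qed.

Lemma anticode_min_dist : is_min_dist (code P) d.
Proof.
split=> [|c cC c_neq0]; first by apply: anticode_wt_attained; rewrite inE eqxx.
by have := anticode_wt_mem cC c_neq0; rewrite !inE => /orP[] /eqP->; rewrite ?leq_subr.
Qed.

Lemma anticode_griesmer : griesmer #|P| m d q.
Proof. by rewrite card_anticode; apply: griesmer_anticode => //; apply: ltnW. Qed.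

Lemma anticode_distance_optimal : distance_optimal F #|P| m d.
Proof.
case=> G' [rkG' min_d']; have := plotkin_bound rkG' min_d'.
by rewrite card_anticode leqNgt plotkin_anticode_gap // ltnW.
Qed.

Lemma anticode_minimal : (#|L|.+2 <= m)%N -> minimal_code (code P).
Proof.
move=> L2_le_m; apply: (minimal_code_wt_ratio (d := d) (W := W)).
  move=> c cC c_neq0; have := anticode_wt_mem cC c_neq0.
  by rewrite !inE => /orP[] /eqP->; rewrite leqnn leq_subr.
by apply: wt_ratio_anticode => //; apply: ltnW.
Qed.
End AnticodeCode.

Section F8.
Variables (F : finFieldType) (w : F).
Hypotheses (cardF : #|F| = 8%N) (w_root : w ^+ 3 + w + 1 = 0).

Definition bit_comb (p : bool * bool * bool) : F :=
  p.1.1%:R + w * p.1.2%:R + w ^+ 2 * p.2%:R.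

Let char2 : (2 \in [pchar F])%N.
Proof. exact: (@card_finPcharP _ 2 3). Qed.

Lemma bit_combD p q :
  bit_comb p + bit_comb q = bit_comb (p.1.1 (+) q.1.1, p.1.2 (+) q.1.2, p.2 (+) q.2).
Proof.
have bitD (a b : bool) : a%:R + b%:R = (a (+) b)%:R :> F.
  by case: a; case: b; rewrite ?addr0 ?add0r ?(addrr_pchar2 char2).
by rewrite /bit_comb /= -!bitD; ring.
Qed.

Lemma bit_comb_eq0 p : bit_comb p = 0 -> p = (false, false, false).
Proof.
have w3 : w ^+ 3 = w + 1.
  by apply/eqP; rewrite -subr_eq0 opprD !(oppr_pchar2 char2) addrA w_root.
have w_neq0 : w != 0 by apply: contra_eq_neq w_root => ->; rewrite expr0n !add0r oner_neq0.
have w1_neq0 : 1 + w != 0.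
  apply/eqP=> /(canRL (addKr 1)); rewrite (oppr_pchar2 char2) addr0 => w1.
  by move: w_root; rewrite w1 expr1n -addrA (addrr_pchar2 char2) addr0; apply/eqP/oner_neq0.
have w2_neq0 : 1 + w + w ^+ 2 != 0.
  have : (1 + w) * (1 + w + w ^+ 2) = w.
    rewrite (_ : _ * _ = 1 + w ^+ 3 + 2%:R * (w + w ^+ 2)); last by ring.
    by rewrite (pcharf0 char2) mul0r addr0 w3 addrCA (addrr_pchar2 char2) addr0.
  by apply: contra_eq_neq => ->; rewrite mulr0 eq_sym.
have sqr_w1 : 1 + w ^+ 2 = (1 + w) ^+ 2.
  by rewrite sqrrD expr1n mul1r mulr2n (addrr_pchar2 char2) addr0.
have w_w1 : w + w ^+ 2 = w * (1 + w) by rewrite mulrDr mulr1.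
case: p => [[[] []] []]; rewrite /bit_comb /= ?mulr1 ?mulr0 ?addr0 ?add0r //= => /eqP;
  rewrite ?sqr_w1 ?w_w1 ?mulf_eq0 ?expf_eq0 ?oner_eq0
          ?(negbTE w_neq0) ?(negbTE w1_neq0) ?(negbTE w2_neq0) //.
Qed.

Lemma bit_comb_inj : injective bit_comb.
Proof.
move=> [[a b] c] [[a' b'] c'] eq_ab.
have /bit_comb_eq0 [xa xb xc] : bit_comb (a (+) a', b (+) b', c (+) c') = 0.
  by rewrite -[RHS](addrr_pchar2 char2 (bit_comb (a', b', c'))) -{1}eq_ab bit_combD.
by rewrite -(addKb a a') xa -(addKb b b') xb -(addKb c c') xc !addbF.
Qed.

Lemma bit_comb_onto (x : F) : exists p, x = bit_comb p.
Proof.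
apply/codomP/(inj_card_onto bit_comb_inj).
by rewrite cardF !card_prod card_bool.
Qed.

Lemma Dset_rV_on m (L : {set 'I_m}) : Dset w L = rV_on F L.
Proof.
apply/setP=> v; rewrite !inE; apply/existsP/forallP.
- move=> [a /andP[aL /existsP[b /andP[bL /existsP[c /andP[cL /eqP->]]]]]] i.
  apply/implyP=> iNL; move: aL bL cL; rewrite !inE.
  move=> /forallP/(_ i) + /forallP/(_ i) + /forallP/(_ i).
  rewrite (negbTE iNL) !andbF !orbF !mxE => /eqP-> /eqP-> /eqP->.
  by rewrite !mulr0 !addr0.
- move=> vL.
  have /fin_all_exists [p vp] : forall i, exists pi,
      v 0 i = bit_comb pi /\ (i \notin L -> pi = (false, false, false)).
    move=> i; case: (boolP (i \in L)) => iL.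
      by have [p ->] := bit_comb_onto (v 0 i); exists p.
    exists (false, false, false); split=> //.
    by move/implyP: (vL i) => /(_ iL)/eqP->; rewrite /bit_comb !mulr0 !addr0.
  have bits_in_Delta (s : bool * bool * bool -> bool) : s (false, false, false) = false ->
      \row_i (s (p i))%:R \in Delta F L.
    move=> s0; rewrite inE; apply/forallP=> i; rewrite mxE.
    case: (boolP (i \in L)) => iL; first by case: (s _); rewrite eqxx ?orbT.
    by have [_ /(_ iL)->] := vp i; rewrite s0 eqxx.
  exists (\row_i (p i).1.1%:R); rewrite (bits_in_Delta (fun q => q.1.1)) //=.
  apply/existsP; exists (\row_i (p i).1.2%:R).
  rewrite (bits_in_Delta (fun q => q.1.2)) //=.
  apply/existsP; exists (\row_i (p i).2%:R); rewrite (bits_in_Delta (fun q => q.2)) //=.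
  by apply/eqP/rowP=> i; rewrite !mxE; have [-> _] := vp i.
Qed.
End F8.

Theorem mainTheorem7 (F : finFieldType) (w : F) (m : nat) (L : {set 'I_m}) :
  #|F| = 8%N ->
  w ^+ 3 + w + 1 = 0 ->
  L != set0 -> L != [set: 'I_m] ->
  let Dc := ~: Dset w L in
  let C := code Dc in
  let n := (2 ^ (3 * m) - 2 ^ (3 * #|L|))%N in
  let d := (7 * 2 ^ (3 * (m - 1)) - 7 * 2 ^ (3 * (#|L| - 1)))%N in
  [/\ #|Dc| = n,
      \rank (code_genmat Dc) = m /\ is_min_dist C d,
      nz_weights_are C [:: d; (7 * 2 ^ (3 * (m - 1)))%N]
      /\ d != (7 * 2 ^ (3 * (m - 1)))%N,
      griesmer #|Dc| m d 8 /\ distance_optimal F #|Dc| m d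
    & (4 <= 3 * (m - #|L|))%N -> minimal_code C].
Proof.
move=> cardF w_root L_neq0 L_proper Dc C n d.
have DcE : Dc = ~: rV_on F L by rewrite /Dc Dset_rV_on.
have pow8 k : (2 ^ (3 * k) = 8 ^ k)%N by rewrite expnM.
rewrite /n /d !pow8 !subn1 -[7%N]/(8.-1)%N -cardF.
have [_ d_lt_W] := andP (anticode_wt_lt F L_neq0 L_proper).
split; first exact: card_anticode DcE.
- split; first exact: anticode_rank L_neq0 L_proper DcE.
  exact: anticode_min_dist L_neq0 L_proper DcE.
- by split; [exact: anticode_nz_weights L_neq0 L_proper DcE | rewrite ltn_eqF].
- split; first exact: anticode_griesmer L_neq0 L_proper DcE.
  exact: anticode_distance_optimal L_neq0 L_proper DcE.
- by move=> L_small; apply: anticode_minimal L_neq0 L_proper DcE _; lia.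
Qed.
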